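(* For every integer $n\ge1$, let $G_n=H_1\vee H_2\vee\cdots\vee H_n$ be a simple complete multipartite graph where each $H_i$ is an independent set with $s_i>(n-1)^2$ vertices. Then for every prime power $q$, $\operatorname{mr}(\mathbb{F}_q,G_n)\le 3$ if and only if $q\ge n-1$.
   Context: $\vee$ denotes the join: the disjoint union together with all edges between vertices of different constituents. For a field $F$ and a simple graph $G$ on vertices $\{1,\dots,n\}$, $S(F,G)$ is the set of symmetric $n\times n$ matrices $A$ over $F$ with $a_{ij}\neq 0$ for $i\ne j$ iff $ij$ is an edge of $G$ (diagonal entries unrestricted), and $\operatorname{mr}(F,G)=\min\{\operatorname{rank}A: A\in S(F,G)\}$. *)

From HB Require Import structures.
From mathcomp Require Import all_boot all_order all_algebra all_field.
Set Implicit Arguments. Unset Strict Implicit. Unset Printing Implicit Defensive.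
Import GRing.Theory.
Local Open Scope ring_scope.

(* A simple graph on a finite vertex type V is given by a symmetric,
   irreflexive relation adj : rel V.  Vertices are numbered 0..#|V|-1
   through enum_val, so matrices are indexed by 'I_#|V|. *)

Definition inS (F : fieldType) (V : finType) (adj : rel V)
    (A : 'M[F]_#|V|) : bool :=
  (A^T == A) &&
  [forall i, forall j, (i != j) ==> ((A i j != 0) == adj (enum_val i) (enum_val j))].

(* mr(F,G) = min { rank A : A in S(F,G) }, for a finite field F
   (the default #|V| is never reached for a simple graph, since S is nonempty). *)
Definition mr (F : finFieldType) (V : finType) (adj : rel V) : nat :=
  \big[minn/#|V|]_(A : 'M[F]_#|V| | inS adj A) \rank A.

Definition cmp_vertex (n : nat) (s : 'I_n -> nat) : finType :=
  {i : 'I_n & 'I_(s i)}.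

Definition cmp_adj (n : nat) (s : 'I_n -> nat) : rel (cmp_vertex s) :=
  fun u v => tag u != tag v.

From HB Require Import structures.
From mathcomp Require Import all_boot all_order all_algebra all_field ring zify.
Set Implicit Arguments. Unset Strict Implicit. Unset Printing Implicit Defensive.
Import Order.TTheory GRing.Theory.
Local Open Scope ring_scope.

(* Upper bound: give the parts distinct points of the projective line
   P^1(F) = option F (possible since n <= q + 1) and let the entry at (x, y)
   be the squared distance (t - u)^2 of the points of their parts (1 if exactly
   one of them is at infinity).  This matrix lies in S(F, G_n) and factors
   through F^3 via the conic t |-> (1, t, t^2), so its rank is at most 3.

   Lower bound: let A in S(F, G_n) have rank <= 3.  In each part, the principal
   block on four of its vertices is diagonal, so one of them has a zero
   diagonal entry; these n vertices give a symmetric n x n matrix M with zero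
   diagonal, nonzero off-diagonal entries and rank <= 3.  Such an M has
   n <= q + 1, by an injection of all indices but one into F:
   - in characteristic 2 every 4 x 4 principal Pfaffian of M vanishes, which
     makes k |-> M j k / M i k injective off i;
   - otherwise three rows of M span its row space, so M is the Gram matrix of
     pairwise non-proportional isotropic vectors of a ternary form (points of
     a conic), and projecting them from one of these points is injective. *)

Lemma mr_le (F : finFieldType) (V : finType) (adj : rel V) (A : 'M[F]_#|V|) :
  inS adj A -> (mr F adj <= \rank A)%N.
Proof. by move=> SA; have := bigmin_le_cond #|V| (fun B : 'M[F]_#|V| => \rank B) SA. Qed.

Lemma mr_witness (F : finFieldType) (V : finType) (adj : rel V) (k : nat) :
  (k < #|V|)%N -> (mr F adj <= k)%N ->
  exists2 A : 'M[F]_#|V|, inS adj A & (\rank A <= k)%N.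
Proof.
move=> ltkV; case: (boolP [exists A : 'M[F]_#|V|, inS adj A && (\rank A <= k)%N]).
  by case/existsP=> A /andP[]; exists A.
rewrite negb_exists => /forallP noA; rewrite leqNgt => /negP[].
have /bigmin_gtP // : (k < #|V|)%O /\ (forall A : 'M[F]_#|V|, inS adj A -> k < \rank A)%O.
by split=> // A SA; move: (noA A); rewrite SA /= -ltnNge.
Qed.

Lemma inSP (F : fieldType) (V : finType) (adj : rel V) (A : 'M[F]_#|V|) :
  reflect ((forall x y, A x y = A y x) /\
           (forall x y, x != y -> (A x y != 0) = adj (enum_val x) (enum_val y)))
          (inS adj A).
Proof.
apply: (iffP andP) => [[/eqP AT /forallP adjA] | [symA adjA]]; split.
- by move=> x y; rewrite -[in LHS]AT mxE.
- by move=> x y xy; move/forallP/(_ y)/implyP/(_ xy)/eqP: (adjA x).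
- by apply/eqP/matrixP => x y; rewrite mxE symA.
- by apply/forallP => x; apply/forallP => y; apply/implyP => xy; rewrite adjA.
Qed.

(* The construction: points of the projective line P^1(F) = option F, where *)
(* Some t is the point [1 : t] and None the point at infinity. *)
Section ProjectiveLine.
Variable F : fieldType.
Implicit Types o p : option F.

(* The point of the conic y^2 = x z over a point of P^1, and its dual. *)
Definition conic_pt o : 3.-tuple F :=
  if o is Some t then [tuple 1; t; t ^+ 2] else [tuple 0; 0; 1].
Definition conic_dual o : 3.-tuple F :=
  if o is Some t then [tuple t ^+ 2; - (t *+ 2); 1] else [tuple 1; 0; 0].

Definition pdist o p : F :=
  match o, p with
  | Some t, Some u => (t - u) ^+ 2
  | None, None => 0
  | _, _ => 1
  end.

Lemma pdistE o p : pdist o p = \sum_(a < 3) tnth (conic_pt o) a * tnth (conic_dual p) a.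
Proof.
rewrite !big_ord_recl big_ord0.
case: o => [t|]; case: p => [u|]; rewrite !(tnth_nth 0) /=;
  by rewrite ?(mul0r, mulr0, mul1r, mulr1, add0r, addr0) //; ring.
Qed.

Lemma pdistC o p : pdist o p = pdist p o.
Proof. by case: o => [t|]; case: p => [u|] //=; rewrite -sqrrN opprB. Qed.

Lemma pdist_eq0 o p : (pdist o p == 0) = (o == p).
Proof.
case: o => [t|]; case: p => [u|] /=; rewrite ?oner_eq0 ?eqxx //.
by rewrite sqrf_eq0 subr_eq0.
Qed.

End ProjectiveLine.

Lemma cmp_rank3_matrix (F : finFieldType) n (s : 'I_n -> nat) :
  (n <= #|F|.+1)%N ->
  exists2 A : 'M[F]_#|cmp_vertex s|, inS (@cmp_adj n s) A & (\rank A <= 3)%N.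
Proof.
move=> le_n_q1.
have le_n_P1 : (n <= #|{: option F}|)%N by rewrite card_option.
pose pt (i : 'I_n) : option F := enum_val (widen_ord le_n_P1 i).
have pt_inj : injective pt by move=> i j /enum_val_inj /(congr1 val) /= /val_inj.
pose h (x : 'I_#|cmp_vertex s|) := pt (tag (enum_val x)).
exists (\matrix_(x, y) pdist (h x) (h y)).
  apply/inSP; split=> x y; rewrite !mxE; first exact: pdistC.
  by move=> _; rewrite pdist_eq0 (inj_eq pt_inj).
have -> : \matrix_(x, y) pdist (h x) (h y) =
    \matrix_(x, a) tnth (conic_pt (h x)) a *m \matrix_(a, y) tnth (conic_dual (h y)) a.
  by apply/matrixP => x y; rewrite !mxE pdistE; apply: eq_bigr => a _; rewrite !mxE.
exact: leq_trans (mxrankM_maxr _ _) (rank_leq_row _).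
Qed.

Lemma mxrank_mxsub (F : fieldType) m n m' n' (f : 'I_m' -> 'I_m) (g : 'I_n' -> 'I_n)
    (A : 'M[F]_(m, n)) :
  (\rank (mxsub f g A) <= \rank A)%N.
Proof.
rewrite -[A in mxsub _ _ A]mul1mx mxsub_mul; apply: leq_trans (mxrankM_maxr _ _) _.
by rewrite -[A in mxsub _ _ A]mulmx1 mxsub_mul mxsub_id mxrankM_maxl.
Qed.

Lemma row_free_block (F : fieldType) m n k (f : 'I_k -> 'I_m) (g : 'I_k -> 'I_n)
    (A : 'M[F]_(m, n)) :
  (forall v : 'rV_k, (forall c, \sum_r v 0 r * A (f r) (g c) = 0) -> v = 0) ->
  row_free (rowsub f A).
Proof.
move=> ker0; apply: inj_row_free => v /rowP vA0; apply: ker0 => c.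
transitivity ((v *m rowsub f A) 0 (g c)); last by rewrite vA0 mxE.
by rewrite mxE; apply: eq_bigr => r _; rewrite mxE.
Qed.

Lemma block_rank (F : fieldType) m n k (f : 'I_k -> 'I_m) (g : 'I_k -> 'I_n)
    (A : 'M[F]_(m, n)) :
  (forall v : 'rV_k, (forall c, \sum_r v 0 r * A (f r) (g c) = 0) -> v = 0) ->
  (k <= \rank A)%N.
Proof.
by move=> /row_free_block/eqP <-; apply: mxrankS; apply: rowsub_sub.
Qed.

Lemma rowsub_span (F : fieldType) m n k (f : 'I_k -> 'I_m) (A : 'M[F]_(m, n)) :
  row_free (rowsub f A) -> (\rank A <= k)%N -> exists D : 'M[F]_(m, k), A = D *m rowsub f A.
Proof.
move=> /eqP free rkA; have subA := rowsub_sub f A.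
have /submxP [D AD] : (A <= rowsub f A)%MS.
  by rewrite -(mxrank_leqif_sup subA).2 eqn_leq mxrankS // free.
by exists D.
Qed.

Lemma diag_block_zero (F : fieldType) N (A : 'M[F]_N) k (x : 'I_k -> 'I_N) :
  (\rank A < k)%N -> (forall a b, a != b -> A (x a) (x b) = 0) ->
  exists a, A (x a) (x a) = 0.
Proof.
move=> rkA offA; case: (pickP (fun a => A (x a) (x a) == 0)) => [a /eqP | diagA].
  by exists a.
suff : (k <= \rank A)%N by rewrite leqNgt rkA.
apply: (block_rank (f := x) (g := x)) => v ker; apply/rowP => b; rewrite mxE.
move: (ker b); rewrite (bigD1 b) //= big1 => [|a /negbTE ab]; last by rewrite offA ?ab ?mulr0.
by rewrite addr0 => /eqP; rewrite mulf_eq0 diagA orbF => /eqP.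
Qed.

(* In characteristic 2, a vector in the left kernel of the symmetric zero-diagonal *)
(* 4 x 4 matrix with upper entries a b c / d e / f is annihilated by its Pfaffian. *)
Lemma pfaffian_kernel (F : comNzRingType) (a b c d e f v0 v1 v2 v3 : F) :
  2 = 0 :> F ->
  v1 * a + v2 * b + v3 * c = 0 -> v0 * a + v2 * d + v3 * e = 0 ->
  v0 * b + v1 * d + v3 * f = 0 -> v0 * c + v1 * e + v2 * f = 0 ->
  let pf := a * f + b * e + c * d in
  [/\ v0 * pf = 0, v1 * pf = 0, v2 * pf = 0 & v3 * pf = 0].
Proof.
move=> two E0 E1 E2 E3 pf; split.
- have -> : v0 * pf = f * (v0 * a + v2 * d + v3 * e) + e * (v0 * b + v1 * d + v3 * f)
      + d * (v0 * c + v1 * e + v2 * f) - 2 * (v1 * d * e + v2 * d * f + v3 * e * f).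
    by rewrite /pf; ring.
  by rewrite E1 E2 E3 two; ring.
- have -> : v1 * pf = f * (v1 * a + v2 * b + v3 * c) + c * (v0 * b + v1 * d + v3 * f)
      + b * (v0 * c + v1 * e + v2 * f) - 2 * (v0 * b * c + v2 * b * f + v3 * c * f).
    by rewrite /pf; ring.
  by rewrite E0 E2 E3 two; ring.
- have -> : v2 * pf = e * (v1 * a + v2 * b + v3 * c) + c * (v0 * a + v2 * d + v3 * e)
      + a * (v0 * c + v1 * e + v2 * f) - 2 * (v0 * a * c + v1 * a * e + v3 * c * e).
    by rewrite /pf; ring.
  by rewrite E0 E1 E3 two; ring.
- have -> : v3 * pf = d * (v1 * a + v2 * b + v3 * c) + b * (v0 * a + v2 * d + v3 * e)
      + a * (v0 * b + v1 * d + v3 * f) - 2 * (v0 * a * b + v1 * a * d + v2 * b * d).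
    by rewrite /pf; ring.
  by rewrite E0 E1 E2 two; ring.
Qed.

Lemma pfaffian4_eq0 (F : fieldType) n (M : 'M[F]_n) (i j k l : 'I_n) :
  2 = 0 :> F -> (forall x y, M x y = M y x) -> (forall x, M x x = 0) ->
  (\rank M <= 3)%N ->
  M i j * M k l + M i k * M j l + M i l * M j k = 0.
Proof.
move=> two symM diagM rkM; apply/eqP; apply: contraTT rkM => pf_neq0; rewrite -ltnNge.
pose ix := tnth [tuple i; j; k; l].
apply: (block_rank (f := ix) (g := ix)) => v ker.
move: (ker ord0) (ker (lift ord0 ord0)) (ker (lift ord0 (lift ord0 ord0)))
  (ker (lift ord0 (lift ord0 (lift ord0 ord0)))).
rewrite !big_ord_recl !big_ord0 /ix !(tnth_nth i) /= !diagM.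
rewrite (symM j i) (symM k i) (symM l i) (symM k j) (symM l j) (symM l k).
rewrite !(mulr0, add0r, addr0, addrA) => E0 E1 E2 E3.
have [P0 P1 P2 P3] := pfaffian_kernel two E0 E1 E2 E3.
apply/rowP => r; rewrite mxE.
suff vpf : v 0 r * (M i j * M k l + M i k * M j l + M i l * M j k) = 0.
  by move/eqP: vpf; rewrite mulf_eq0 (negbTE pf_neq0) orbF => /eqP.
by do 3![case: (unliftP ord0 r) => [{}r|] -> //]; rewrite (ord1 r).
Qed.

(* Outside characteristic 2, a symmetric zero-diagonal 3 x 3 matrix with *)
(* nonzero off-diagonal entries a b c has a trivial left kernel (its determinant is 2abc). *)
Lemma tri_kernel (F : fieldType) (a b c v0 v1 v2 : F) :
  2 != 0 :> F -> a != 0 -> b != 0 -> c != 0 ->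
  v1 * a + v2 * b = 0 -> v0 * a + v2 * c = 0 -> v0 * b + v1 * c = 0 ->
  [/\ v0 = 0, v1 = 0 & v2 = 0].
Proof.
move=> two a0 b0 c0 E0 E1 E2.
have cancel2 (u w z : F) : u != 0 -> w != 0 -> 2 * u * w * z = 0 -> z = 0.
  by move=> u0 w0 /eqP; rewrite !mulf_eq0 (negbTE two) (negbTE u0) (negbTE w0) => /eqP.
split.
- apply: (cancel2 a b) => //.
  have -> : 2 * a * b * v0 = b * (v0 * a + v2 * c) + a * (v0 * b + v1 * c)
      - c * (v1 * a + v2 * b) by ring.
  by rewrite E0 E1 E2; ring.
- apply: (cancel2 a c) => //.
  have -> : 2 * a * c * v1 = c * (v1 * a + v2 * b) + a * (v0 * b + v1 * c)
      - b * (v0 * a + v2 * c) by ring.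
  by rewrite E0 E1 E2; ring.
- apply: (cancel2 b c) => //.
  have -> : 2 * b * c * v2 = c * (v1 * a + v2 * b) + b * (v0 * a + v2 * c)
      - a * (v0 * b + v1 * c) by ring.
  by rewrite E0 E1 E2; ring.
Qed.

Lemma rows_span3 (F : fieldType) n (M : 'M[F]_n) (i1 i2 i3 : 'I_n) :
  2 != 0 :> F -> (forall x y, M x y = M y x) -> (forall x, M x x = 0) ->
  M i1 i2 != 0 -> M i1 i3 != 0 -> M i2 i3 != 0 -> (\rank M <= 3)%N ->
  exists x1 x2 x3 : 'I_n -> F,
    forall k y, M k y = x1 k * M i1 y + x2 k * M i2 y + x3 k * M i3 y.
Proof.
move=> two symM diagM a_neq0 b_neq0 c_neq0 rkM.
pose ix := tnth [tuple i1; i2; i3].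
have free : row_free (rowsub ix M).
  apply: (row_free_block (g := ix)) => v ker.
  move: (ker ord0) (ker (lift ord0 ord0)) (ker (lift ord0 (lift ord0 ord0))).
  rewrite !big_ord_recl !big_ord0 /ix !(tnth_nth i1) /= !diagM.
  rewrite (symM i2 i1) (symM i3 i1) (symM i3 i2) !(mulr0, add0r, addr0, addrA).
  move=> E0 E1 E2; have [v0 v1 v2] := tri_kernel two a_neq0 b_neq0 c_neq0 E0 E1 E2.
  apply/rowP => r; rewrite mxE.
  by do 2![case: (unliftP ord0 r) => [{}r|] -> //]; rewrite (ord1 r).
have [D MD] := rowsub_span free rkM.
exists (fun k => D k ord0), (fun k => D k (lift ord0 ord0)),
  (fun k => D k (lift ord0 (lift ord0 ord0))) => k y.
by rewrite {1}MD mxE !big_ord_recl big_ord0 !mxE /ix !(tnth_nth i1) /= addr0 addrA.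
Qed.

(* The bilinear form of the symmetric zero-diagonal 3 x 3 matrix with *)
(* off-diagonal entries a (position 12), b (13) and c (23). *)
Definition tri_form (F : nzRingType) (a b c x1 x2 x3 y1 y2 y3 : F) : F :=
  x1 * (a * y2 + b * y3) + x2 * (a * y1 + c * y3) + x3 * (b * y1 + c * y2).

(* Two isotropic vectors x, y whose projections from e1 agree are proportional, *)
(* hence orthogonal; a x2 + b x3 is the pairing of x with e1, and equal *)
(* projections mean x2 / (a x2 + b x3) = y2 / (a y2 + b y3). *)
Lemma isotropic_same_projection (F : fieldType) (a b c x1 x2 x3 y1 y2 y3 : F) :
  2 != 0 :> F -> b != 0 ->
  tri_form a b c x1 x2 x3 x1 x2 x3 = 0 -> tri_form a b c y1 y2 y3 y1 y2 y3 = 0 ->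
  a * x2 + b * x3 != 0 -> a * y2 + b * y3 != 0 ->
  x2 * (a * y2 + b * y3) = y2 * (a * x2 + b * x3) ->
  tri_form a b c x1 x2 x3 y1 y2 y3 = 0.
Proof.
move=> two b0 Qx Qy mx0 my0 same.
(* The diagonal value of the form is twice x1 (a x2 + b x3) + c x2 x3. *)
have half_iso (z1 z2 z3 : F) : tri_form a b c z1 z2 z3 z1 z2 z3 = 0 ->
    z1 * (a * z2 + b * z3) = - (c * z2 * z3).
  move=> Qz; apply/eqP; rewrite -addr_eq0; apply/eqP.
  have /eqP : 2 * (z1 * (a * z2 + b * z3) + c * z2 * z3) = 0.
    by rewrite -Qz /tri_form; ring.
  by rewrite mulf_eq0 (negbTE two) => /eqP.
have Qx' := half_iso _ _ _ Qx; have Qy' := half_iso _ _ _ Qy.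
set mx := a * x2 + b * x3 in mx0 same Qx'.
set my := a * y2 + b * y3 in my0 same Qy'.
pose t := my / mx.
have myE : my = t * mx by rewrite /t divfK.
have t0 : t != 0 by apply: contraNneq my0 => t0; rewrite myE t0 mul0r.
have y2E : y2 = t * x2 by apply: (mulIf mx0); rewrite -same myE; ring.
have y3E : y3 = t * x3.
  apply: (mulfI b0); apply: (addrI (a * y2)).
  by rewrite -/my myE /mx y2E; ring.
have y1E : y1 = t * x1.
  apply: (mulfI (mulf_neq0 t0 mx0)).
  have -> : t * mx * y1 = y1 * my by rewrite myE; ring.
  have -> : t * mx * (t * x1) = t * t * (x1 * mx) by ring.
  by rewrite Qy' Qx' y2E y3E; ring.
have -> : tri_form a b c x1 x2 x3 y1 y2 y3 = t * tri_form a b c x1 x2 x3 x1 x2 x3.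
  by rewrite y1E y2E y3E /tri_form; ring.
by rewrite Qx mulr0.
Qed.

Lemma card_le_inj_off1 (F : finType) n (i : 'I_n) (h : 'I_n -> F) :
  {in [set~ i] &, injective h} -> (n <= #|F|.+1)%N.
Proof.
move=> /card_in_imset; rewrite cardsC1 card_ord => card_img.
have n_gt0 : (0 < n)%N := leq_ltn_trans (leq0n i) (ltn_ord i).
by rewrite -(prednK n_gt0) ltnS -card_img max_card.
Qed.

Section CompleteRank3.
Variables (F : finFieldType) (n : nat) (M : 'M[F]_n).
Hypotheses (symM : forall x y, M x y = M y x) (diagM : forall x, M x x = 0).
Hypotheses (offM : forall x y, x != y -> M x y != 0) (rkM : (\rank M <= 3)%N).

(* In characteristic 2, k |-> M j k / M i k is injective off i: a collision *)
(* for k != l would leave the Pfaffian of {i, j, k, l} equal to M i j M k l. *)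
Lemma complete_bound_char2 (i j : 'I_n) : 2 = 0 :> F -> i != j -> (n <= #|F|.+1)%N.
Proof.
move=> two ij; apply: (@card_le_inj_off1 _ _ i (fun k => M j k / M i k)).
move=> k l; rewrite !in_setC1 => ki li /eqP; apply: contraTeq => kl.
rewrite eqr_div ?offM 1?eq_sym //.
apply: contra_neq (mulf_neq0 (offM ij) (offM kl)) => same.
rewrite -(pfaffian4_eq0 i j k l two symM diagM rkM).
have -> : M i l * M j k = M i k * M j l by rewrite [LHS]mulrC -same mulrC.
have dbl (z : F) : z + z = 0 by rewrite -mulr2n -mulr_natl two mul0r.
by rewrite -addrA dbl addr0.
Qed.

(* Outside characteristic 2, the rows i1 i2 i3 give coordinates in which M is *)
(* the Gram matrix of isotropic vectors of tri_form; k |-> x2 k / M i1 k is the *)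
(* projection from the point of i1, injective off i1. *)
Lemma complete_bound_odd (i1 i2 i3 : 'I_n) :
  2 != 0 :> F -> i1 != i2 -> i1 != i3 -> i2 != i3 -> (n <= #|F|.+1)%N.
Proof.
move=> two n12 n13 n23.
have [x1 [x2 [x3 span]]] :=
  rows_span3 two symM diagM (offM n12) (offM n13) (offM n23) rkM.
pose a := M i1 i2; pose b := M i1 i3; pose c := M i2 i3.
have pair1 k : M i1 k = a * x2 k + b * x3 k.
  by rewrite symM span diagM (symM i2 i1) (symM i3 i1) /a /b; ring.
have gram k l : M k l = tri_form a b c (x1 k) (x2 k) (x3 k) (x1 l) (x2 l) (x3 l).
  rewrite (span k l) (symM i1 l) (symM i2 l) (symM i3 l) (span l i1) (span l i2).
  rewrite (span l i3) !diagM (symM i2 i1) (symM i3 i1) (symM i3 i2) /tri_form /a /b /c.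
  ring.
apply: (@card_le_inj_off1 _ _ i1 (fun k => x2 k / M i1 k)).
move=> k l; rewrite !in_setC1 => k1 l1 /eqP; apply: contraTeq => kl.
rewrite eqr_div ?offM 1?eq_sym // !pair1.
apply: contra_neq (offM kl) => same.
rewrite gram; apply: isotropic_same_projection two _ _ _ _ _ (esym same).
- exact: offM n13.
- by rewrite -gram diagM.
- by rewrite -gram diagM.
- by rewrite -pair1 offM // eq_sym.
- by rewrite -pair1 offM // eq_sym.
Qed.

Lemma complete_rank3_bound : (3 <= n)%N -> (n <= #|F|.+1)%N.
Proof.
move=> n_ge3.
pose i1 := Ordinal (ltnW (ltnW n_ge3)); pose i2 := Ordinal (ltnW n_ge3).
pose i3 := Ordinal n_ge3.
have [two | two] := eqVneq (2 : F) 0.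
- exact: (@complete_bound_char2 i1 i2).
- exact: (@complete_bound_odd i1 i2 i3).
Qed.

End CompleteRank3.

Section PartVertices.
Variables (n : nat) (s : 'I_n -> nat).
Hypothesis s_ge4 : forall i, (4 <= s i)%N.

Definition part_vertex (i : 'I_n) (a : 'I_4) : cmp_vertex s :=
  Tagged (fun j => 'I_(s j)) (widen_ord (s_ge4 i) a).

Lemma part_vertex_inj i : injective (part_vertex i).
Proof. by move=> a b ab; apply: val_inj; exact: (congr1 val (eq_from_Tagged ab)). Qed.

(* In particular G_n has more than 3 vertices, so mr <= 3 is a nontrivial bound. *)
Lemma card_cmp_vertex_gt3 : (0 < n)%N -> (3 < #|cmp_vertex s|)%N.
Proof.
by move=> n_gt0; have := @leq_card _ _ _ (@part_vertex_inj (Ordinal n_gt0)); rewrite card_ord.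
Qed.

(* Each part contains a vertex with a zero diagonal entry (its 4 x 4 principal *)
(* block is diagonal); these vertices span a complete pattern of rank <= 3. *)
Lemma cmp_rank3_bound (F : finFieldType) (A : 'M[F]_#|cmp_vertex s|) :
  (3 <= n)%N -> inS (@cmp_adj n s) A -> (\rank A <= 3)%N -> (n <= #|F|.+1)%N.
Proof.
move=> n_ge3 /inSP [symA adjA] rkA.
pose x i a := enum_rank (part_vertex i a).
have zero_in_part i : {a | A (x i a) (x i a) == 0}.
  apply: sigW; have [|a /eqP] := diag_block_zero (x := x i) rkA; last by exists a.
  move=> a b ab; apply/eqP; rewrite -[_ == 0]negbK adjA /cmp_adj ?enum_rankK ?eqxx //.
  by rewrite (inj_eq enum_rank_inj) (inj_eq (@part_vertex_inj i)).
pose w i := x i (sval (zero_in_part i)).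
apply: (@complete_rank3_bound F n (mxsub w w A)) => //.
- by move=> i j; rewrite !mxE symA.
- by move=> i; rewrite mxE; apply/eqP; exact: (svalP (zero_in_part i)).
- move=> i j ij; rewrite mxE adjA /cmp_adj ?enum_rankK //.
  by apply: contraNneq ij => /enum_rank_inj /(congr1 tag) /= ->.
- exact: leq_trans (mxrank_mxsub w w A) rkA.
Qed.

End PartVertices.

Theorem mainTheorem19 (n : nat) (s : 'I_n -> nat) :
  (1 <= n)%N ->
  (forall i : 'I_n, ((n - 1) ^ 2 < s i)%N) ->
  forall F : finFieldType,
    (mr F (@cmp_adj n s) <= 3)%N <-> (n - 1 <= #|F|)%N.
Proof.
move=> n_gt0 s_large F; split=> [mr_le3 | le_n1_q].
- have F_gt0 : (0 < #|F|)%N by apply/card_gt0P; exists 0.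
  have [n_le2 | n_ge3] := leqP n 2; first by lia.
  have s_ge4 i : (4 <= s i)%N.
    have : (2 ^ 2 <= (n - 1) ^ 2)%N by rewrite leq_exp2r //; lia.
    by have := s_large i; lia.
  have [A SA rkA] := mr_witness (card_cmp_vertex_gt3 s_ge4 n_gt0) mr_le3.
  by have := cmp_rank3_bound s_ge4 n_ge3 SA rkA; lia.
- have [A SA rkA] := @cmp_rank3_matrix F n s (ltac:(lia)).
  exact: leq_trans (mr_le SA) rkA.
Qed.
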